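(* Let $n\geq2$ and let $\mathbb{F}$ be a field. Then the reduct $\widetilde H_n(\mathbb{F})/\sim$ is isomorphic to $H_n(\mathbb{F})$.
   Context: Let $V=\mathbb{F}^{n+1}$ with dual $V^*$. $H_n(\mathbb{F})$ is the graph whose vertices are pairs $(x,X)$ with $x$ a point and $X$ a hyperplane of the projective space $\mathbb{P}(V)$ with $x\not\subset X$, where $(x,X)\perp(y,Y)$ iff $x\subset Y$ and $y\subset X$. $\widetilde H_n(\mathbb{F})$ is the graph with vertex set $\{v\otimes f\in V\otimes V^*: v\in V, f\in V^*, f(v)\neq0\}$ in which $v\otimes f\perp w\otimes g$ iff $f(w)=g(v)=0$. For a graph, $u\sim v$ iff $u,v$ have the same neighbourhood; the reduct $\Gamma/\sim$ has the $\sim$-classes as vertices, with adjacency inherited from representatives. *)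

From HB Require Import structures.
From mathcomp Require Import all_boot all_order all_algebra.
Set Implicit Arguments. Unset Strict Implicit. Unset Printing Implicit Defensive.
Import GRing.Theory.
Local Open Scope ring_scope.

Definition same_nbhd {T : Type} (adj : T -> T -> Prop) (u v : T) : Prop :=
  forall w, adj u w <-> adj v w.

Definition reduct_vert {T : Type} (adj : T -> T -> Prop) : Type :=
  {C : T -> Prop | exists u, C = same_nbhd adj u}.

Definition reduct_adj {T : Type} (adj : T -> T -> Prop)
  (C D : reduct_vert adj) : Prop :=
  exists u v, sval C u /\ sval D v /\ adj u v.

Definition graph_iso {T1 T2 : Type} (adj1 : T1 -> T1 -> Prop)
  (adj2 : T2 -> T2 -> Prop) : Prop :=
  exists f : T1 -> T2, bijective f /\ forall x y, adj1 x y <-> adj2 (f x) (f y).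

(* V = F^(n+1) as row vectors; subspaces of V are represented canonically by
   square matrices A with <<A>>%MS = A (mxalgebra), row space = subspace. *)

Section Hn.
Variables (F : fieldType) (n : nat).

Definition is_point (A : 'M[F]_(n.+1)) : bool :=
  (\rank A == 1)%N && (<<A>>%MS == A).

Definition is_hyperplane (A : 'M[F]_(n.+1)) : bool :=
  (\rank A == n)%N && (<<A>>%MS == A).

Definition H_vert : Type :=
  {p : 'M[F]_(n.+1) * 'M[F]_(n.+1) |
     [&& is_point p.1, is_hyperplane p.2 & ~~ (p.1 <= p.2)%MS]}.

Definition H_adj (u v : H_vert) : Prop :=
  ((sval u).1 <= (sval v).2)%MS /\ ((sval v).1 <= (sval u).2)%MS.

(* V* = F^(n+1) as row vectors with the pairing f(v) = sum_i f_i v_i;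
   V ⊗ V* is modelled as (n+1)x(n+1) matrices, v ⊗ f = (v_i f_j)_{i,j}. *)

Definition dual_pair (f v : 'rV[F]_(n.+1)) : F := \sum_i f 0 i * v 0 i.

Definition tens (v f : 'rV[F]_(n.+1)) : 'M[F]_(n.+1) :=
  \matrix_(i, j) (v 0 i * f 0 j).

Definition Ht_vert : Type :=
  {M : 'M[F]_(n.+1) | exists v f, M = tens v f /\ dual_pair f v != 0}.

Definition Ht_adj (a b : Ht_vert) : Prop :=
  exists v f w g, sval a = tens v f /\ sval b = tens w g /\
    dual_pair f w = 0 /\ dual_pair g v = 0.

End Hn.

(* The map v ⊗ f ↦ (⟨v⟩, ker f) sends the vertices of H̃_n(F) onto those of
   H_n(F), and since (v ⊗ f)(w ⊗ g) = f(w) · v ⊗ g, two vertices are adjacent iff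
   their images are.  The neighbourhood of v ⊗ f determines ker f: every w ≠ 0 in
   ker f is paired with a functional g with g(v) = 0 ≠ g(w), and w ⊗ g is then a
   neighbour.  Dually it determines the annihilator of v, so vertices with the
   same neighbourhood have proportional factors and the same image.  Hence the
   fibres of the map are exactly the ~-classes. *)

From HB Require Import structures.
From mathcomp Require Import all_boot all_order all_algebra.
From Stdlib Require Import ClassicalEpsilon ProofIrrelevance.
From Stdlib Require Import FunctionalExtensionality PropExtensionality.

Set Implicit Arguments. Unset Strict Implicit. Unset Printing Implicit Defensive.
Import GRing.Theory.

Section Reduct.
Variables (T1 T2 : Type) (adj1 : T1 -> T1 -> Prop) (adj2 : T2 -> T2 -> Prop).
Variable p : T1 -> T2.
Hypothesis p_surj : forall y, exists x, p x = y.
Hypothesis p_adj : forall x y, adj1 x y <-> adj2 (p x) (p y).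
Hypothesis same_nbhd_p : forall x y, same_nbhd adj1 x y -> p x = p y.

Lemma same_nbhdE x y : same_nbhd adj1 x y <-> p x = p y.
Proof.
split=> [|Exy z]; first exact: same_nbhd_p.
by rewrite !p_adj Exy.
Qed.

Definition nbhd_class (u : T1) : reduct_vert adj1 :=
  exist _ (same_nbhd adj1 u) (ex_intro _ u erefl).

Lemma reduct_vertP (C : reduct_vert adj1) : exists u, C = nbhd_class u.
Proof. by case: C => c [u Eu]; exists u; exact: subset_eq_compat. Qed.

Lemma nbhd_class_eq x y : nbhd_class x = nbhd_class y <-> p x = p y.
Proof.
split=> [/(congr1 (fun C => sval C y)) /= Exy | Exy].
  by apply/same_nbhdE; rewrite Exy; exact/same_nbhdE.
apply: subset_eq_compat; apply: functional_extensionality => z.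
by apply: propositional_extensionality; rewrite !same_nbhdE Exy.
Qed.

Lemma reduct_adj_class x y :
  reduct_adj (nbhd_class x) (nbhd_class y) <-> adj2 (p x) (p y).
Proof.
split=> [[x' [y' /= [/same_nbhdE -> [/same_nbhdE ->]]]] | ]; first by rewrite p_adj.
by rewrite -p_adj => Hxy; exists x, y; rewrite /= !same_nbhdE.
Qed.

Definition class_rep (C : reduct_vert adj1) : T1 :=
  proj1_sig (constructive_indefinite_description _ (reduct_vertP C)).

Lemma class_repK C : nbhd_class (class_rep C) = C.
Proof.
by rewrite /class_rep; case: constructive_indefinite_description.
Qed.

Definition class_image (C : reduct_vert adj1) : T2 := p (class_rep C).

Lemma class_image_class x : class_image (nbhd_class x) = p x.
Proof. by apply/nbhd_class_eq; rewrite class_repK. Qed.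

Lemma reduct_graph_iso : graph_iso (@reduct_adj _ adj1) adj2.
Proof.
pose preim y := proj1_sig (constructive_indefinite_description _ (p_surj y)).
have preimK y : p (preim y) = y.
  by rewrite /preim; case: constructive_indefinite_description.
exists class_image; split.
  exists (fun y => nbhd_class (preim y)) => [C | y]; last first.
    by rewrite class_image_class preimK.
  have [x ->] := reduct_vertP C.
  by apply/nbhd_class_eq; rewrite preimK class_image_class.
move=> C D; have [x ->] := reduct_vertP C; have [y ->] := reduct_vertP D.
by rewrite !class_image_class reduct_adj_class.
Qed.

End Reduct.

Local Open Scope ring_scope.

Section MxKernel.
Variable F : fieldType.

Lemma kermxZ m k (a : F) (A : 'M[F]_(m, k)) :
  a != 0 -> (kermx (a *: A) :=: kermx A)%MS.
Proof.
move=> a_nz.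
have subE p (X : 'M_(p, m)) : (X <= kermx (a *: A))%MS = (X <= kermx A)%MS.
  by rewrite !sub_kermx -scalemxAr scaler_eq0 (negbTE a_nz).
by apply/eqmxP/andP; split; [rewrite -subE | rewrite subE].
Qed.

Lemma kermxMfree m k l (A : 'M[F]_(m, k)) (B : 'M[F]_(k, l)) :
  row_free B -> (kermx (A *m B) :=: kermx A)%MS.
Proof.
move=> freeB.
have subE p (X : 'M_(p, m)) : (X <= kermx (A *m B))%MS = (X <= kermx A)%MS.
  by rewrite !sub_kermx mulmxA mulmx_free_eq0.
by apply/eqmxP/andP; split; [rewrite -subE | rewrite subE].
Qed.

Lemma row_free_rV k (v : 'rV[F]_k) : row_free v = (v != 0).
Proof. by rewrite /row_free rank_rV; case: (v != 0). Qed.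

End MxKernel.

Section Tensors.
Variables (F : fieldType) (n : nat).
Local Notation rV := 'rV[F]_n.+1.
Local Notation dual := (@dual_pair F n).
Local Notation tens := (@tens F n).

Lemma dual_pairC (f v : rV) : dual f v = dual v f.
Proof. by apply: eq_bigr => i _; rewrite mulrC. Qed.

Lemma dual_pair_mx (f v : rV) : f *m v^T = (dual f v)%:M.
Proof.
rewrite [LHS]mx11_scalar !mxE; congr _%:M.
by apply: eq_bigr => i _; rewrite !mxE.
Qed.

Lemma mul_tr_eq0 (f v : rV) : (f *m v^T == 0) = (dual f v == 0).
Proof.
rewrite dual_pair_mx; apply/eqP/eqP => [/matrixP/(_ 0 0)|->]; last exact: raddf0.
by rewrite !mxE.
Qed.

Lemma dual_pairBl (f g v : rV) : dual (f - g) v = dual f v - dual g v.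
Proof. by rewrite -sumrB; apply: eq_bigr => i _; rewrite !mxE mulrBl. Qed.

Lemma dual_pairZl (c : F) (f v : rV) : dual (c *: f) v = c * dual f v.
Proof. by rewrite mulr_sumr; apply: eq_bigr => i _; rewrite !mxE mulrA. Qed.

Lemma dual_pair_deltal (i : 'I_n.+1) (v : rV) : dual (delta_mx 0 i) v = v 0 i.
Proof.
rewrite /dual_pair (bigD1 i) //= big1 => [|j /negbTE ji]; last first.
  by rewrite mxE ji mul0r.
by rewrite mxE !eqxx mul1r addr0.
Qed.

Lemma dual_pair0l (v : rV) : dual 0 v = 0.
Proof. by apply: big1 => i _; rewrite mxE mul0r. Qed.

Lemma dual_pair_neq0 (f v : rV) : dual f v != 0 -> (f != 0) && (v != 0).
Proof.
apply: contraR; rewrite negb_and !negbK => /orP[]/eqP->;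
  by rewrite ?dual_pair0l // dual_pairC dual_pair0l.
Qed.

Lemma tensE (v f : rV) : tens v f = v^T *m f.
Proof. by apply/matrixP => i j; rewrite !mxE big_ord1 !mxE. Qed.

Lemma tens_mul (v f w g : rV) : tens v f *m tens w g = dual f w *: tens v g.
Proof.
by rewrite !tensE mulmxA -(mulmxA v^T) dual_pair_mx mul_mx_scalar scalemxAl.
Qed.

Lemma tens_mul_eq0 (v f w g : rV) : v != 0 -> g != 0 ->
  (tens v f *m tens w g == 0) = (dual f w == 0).
Proof.
move=> v_nz g_nz; rewrite tens_mul scaler_eq0 tensE.
by rewrite mulmx_free_eq0 ?row_free_rV // trmx_eq0 (negbTE v_nz) orbF.
Qed.

End Tensors.

Section HtToH.
Variables (F : fieldType) (n : nat).
Local Notation rV := 'rV[F]_n.+1.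
Local Notation T := (Ht_vert F n).
Local Notation dual := (@dual_pair F n).
Local Notation tens := (@tens F n).

Lemma separating_functional (v f w : rV) :
  dual f v != 0 -> dual f w = 0 -> w != 0 ->
  exists2 g : rV, dual g v = 0 & dual g w != 0.
Proof.
move=> fv fw /rV0Pn[i wi]; exists (delta_mx 0 i - (v 0 i / dual f v) *: f).
  by rewrite dual_pairBl dual_pairZl dual_pair_deltal divfK // subrr.
by rewrite dual_pairBl dual_pairZl dual_pair_deltal fw mulr0 subr0.
Qed.

Lemma dual_pair_proportional (f f' v : rV) : dual f v != 0 ->
  (forall w, dual f w = 0 -> dual f' w = 0) -> f' = (dual f' v / dual f v) *: f.
Proof.
move=> fv ker_ff'; apply/rowP => j; rewrite mxE.
have := ker_ff' (delta_mx 0 j - (f 0 j / dual f v) *: v).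
rewrite !(dual_pairC _ (_ - _)) !dual_pairBl !dual_pairZl !dual_pair_deltal.
rewrite !(dual_pairC v) divfK // subrr => /(_ erefl) /eqP.
rewrite subr_eq0 => /eqP ->.
by rewrite mulrAC [RHS]mulrC mulrA.
Qed.

Lemma nbhd_proportional (v f f' : rV) : dual f v != 0 ->
  (forall w g, dual g w != 0 -> dual f w = 0 -> dual g v = 0 -> dual f' w = 0) ->
  f' = (dual f' v / dual f v) *: f.
Proof.
move=> fv nbhd; apply: (dual_pair_proportional fv) => w fw.
have [->|w_nz] := eqVneq w 0; first by rewrite dual_pairC dual_pair0l.
by have [g gv gw] := separating_functional fv fw w_nz; exact: nbhd gw fw gv.
Qed.

Lemma Ht_adjE (a b : T) :
  Ht_adj a b <-> sval a *m sval b = 0 /\ sval b *m sval a = 0.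
Proof.
split=> [[v [f [w [g [-> [-> [fw gv]]]]]]] | [/eqP ab /eqP ba]].
  by rewrite !tens_mul fw gv !scale0r.
case: (svalP a) (svalP b) => v [f [Ea /dual_pair_neq0/andP[f_nz v_nz]]].
move=> [w [g [Eb /dual_pair_neq0/andP[g_nz w_nz]]]].
move: ab ba; rewrite Ea Eb !tens_mul_eq0 // => /eqP fw /eqP gv.
by exists v, f, w, g.
Qed.

Definition tens_vert (v f : rV) (fv : dual f v != 0) : T :=
  exist _ (tens v f) (ex_intro _ v (ex_intro _ f (conj erefl fv))).

Lemma Ht_adj_tens (a : T) (v f w g : rV) (gw : dual g w != 0) :
  sval a = tens v f -> dual f v != 0 ->
  Ht_adj a (tens_vert gw) <-> dual f w = 0 /\ dual g v = 0.
Proof.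
move=> Ea /dual_pair_neq0/andP[f_nz v_nz].
have /andP[g_nz w_nz] := dual_pair_neq0 gw.
rewrite Ht_adjE Ea /=; split=> [[/eqP ab /eqP ba] | [fw gv]].
  by move: ab ba; rewrite !tens_mul_eq0 // => /eqP-> /eqP->.
by rewrite !tens_mul fw gv !scale0r.
Qed.

Definition point_of (M : 'M[F]_n.+1) := <<M^T>>%MS.
Definition hyperplane_of (M : 'M[F]_n.+1) := <<kermx M^T>>%MS.

Lemma point_of_tens (v f : rV) : f != 0 -> point_of (tens v f) = <<v>>%MS.
Proof.
move=> f_nz; apply: eq_genmx; rewrite tensE trmx_mul trmxK.
by apply: eqmxMfull; rewrite /row_full mxrank_tr rank_rV f_nz.
Qed.

Lemma hyperplane_of_tens (v f : rV) :
  v != 0 -> hyperplane_of (tens v f) = <<kermx f^T>>%MS.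
Proof.
move=> v_nz; apply: eq_genmx; rewrite tensE trmx_mul trmxK.
by apply: kermxMfree; rewrite row_free_rV.
Qed.

Lemma tens_flag (v f : rV) : dual f v != 0 ->
  [&& is_point <<v>>%MS, is_hyperplane <<kermx f^T>>%MS
    & ~~ (<<v>> <= <<kermx f^T>>)%MS].
Proof.
move=> fv; have /andP[f_nz v_nz] := dual_pair_neq0 fv.
rewrite /is_point /is_hyperplane !genmx_id !genmxE mxrank_ker mxrank_tr.
rewrite !rank_rV f_nz v_nz.
by rewrite subn1 !eqxx sub_kermx mul_tr_eq0 dual_pairC.
Qed.

Lemma Ht_to_H_subproof (a : T) :
  [&& is_point (point_of (sval a)), is_hyperplane (hyperplane_of (sval a))
    & ~~ (point_of (sval a) <= hyperplane_of (sval a))%MS].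
Proof.
case: (svalP a) => v [f [-> fv]]; have /andP[f_nz v_nz] := dual_pair_neq0 fv.
by rewrite point_of_tens // hyperplane_of_tens // tens_flag.
Qed.

Definition Ht_to_H (a : T) : H_vert F n :=
  exist _ (point_of (sval a), hyperplane_of (sval a)) (Ht_to_H_subproof a).

Lemma H_adj_Ht_to_H (a b : T) : H_adj (Ht_to_H a) (Ht_to_H b) <-> Ht_adj a b.
Proof.
rewrite Ht_adjE /H_adj /= /point_of /hyperplane_of !genmxE !sub_kermx.
rewrite -!trmx_mul !trmx_eq0.
by split=> -[? ?]; split; apply/eqP.
Qed.

Lemma Ht_to_H_surj (h : H_vert F n) : exists a, Ht_to_H a = h.
Proof.
case: h => -[x X] flag.
have /and3P[/andP[rank_x /eqP gen_x] /andP[rank_X /eqP gen_X] xX]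
  : [&& is_point x, is_hyperplane X & ~~ (x <= X)%MS] := flag.
have /rowV0Pn[v vx v_nz] : x != 0 by rewrite -mxrank_eq0 (eqP rank_x).
have /rowV0Pn[f fX f_nz] : kermx X^T != 0.
  by rewrite -mxrank_eq0 mxrank_ker mxrank_tr (eqP rank_X) subSnn.
have v_x : (v == x)%MS.
  by rewrite -(mxrank_leqif_eq vx).2 rank_rV v_nz (eqP rank_x).
have X_f : (X == kermx f^T)%MS.
  have X_sub : (X <= kermx f^T)%MS.
    by rewrite sub_kermx -trmx_eq0 trmx_mul trmxK -sub_kermx.
  rewrite -(mxrank_leqif_eq X_sub).2 mxrank_ker mxrank_tr rank_rV f_nz.
  by rewrite (eqP rank_X) subn1.
have fv : dual f v != 0.
  apply: contraNneq xX => fv0.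
  by rewrite -(eqmxP v_x) (eqmxP X_f) sub_kermx mul_tr_eq0 dual_pairC fv0.
exists (tens_vert fv); apply: val_inj => /=.
rewrite point_of_tens // hyperplane_of_tens // -gen_x -gen_X.
congr (_, _); apply: eq_genmx; first exact: eqmxP v_x.
exact: eqmx_sym (eqmxP X_f).
Qed.

Lemma Ht_to_H_same_nbhd (u u' : T) :
  same_nbhd (@Ht_adj F n) u u' -> Ht_to_H u = Ht_to_H u'.
Proof.
move=> uu'; case: (svalP u) (svalP u') => v [f [Eu fv]] [v' [f' [Eu' fv']]].
have /andP[f_nz v_nz] := dual_pair_neq0 fv.
have /andP[f'_nz v'_nz] := dual_pair_neq0 fv'.
have nbhd w g (gw : dual g w != 0) :
    dual f w = 0 -> dual g v = 0 -> dual f' w = 0 /\ dual g v' = 0.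
  by move=> fw gv; apply/(Ht_adj_tens gw Eu' fv')/uu'/(Ht_adj_tens gw Eu fv).
have Ef' : f' = (dual f' v / dual f v) *: f.
  by apply: nbhd_proportional => // w g gw fw gv; case: (nbhd w g gw fw gv).
have Ev' : v' = (dual v' f / dual v f) *: v.
  (* the previous argument with the roles of vectors and functionals exchanged *)
  apply: nbhd_proportional => [|g w]; first by rewrite dual_pairC.
  rewrite (dual_pairC w g) (dual_pairC v g) (dual_pairC w f) (dual_pairC v' g).
  by move=> wg vg wf; case: (nbhd w g wg wf vg).
have c_nz : dual f' v / dual f v != 0.
  by apply: contraNneq f'_nz => c0; rewrite Ef' c0 scale0r.
have c'_nz : dual v' f / dual v f != 0.
  by apply: contraNneq v'_nz => c0; rewrite Ev' c0 scale0r.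
apply: val_inj => /=; rewrite Eu Eu' !point_of_tens // !hyperplane_of_tens //.
rewrite {1}Ef' {1}Ev' linearZ /=.
by rewrite (eq_genmx (eqmx_scale _ c'_nz)) (eq_genmx (kermxZ _ c_nz)).
Qed.

End HtToH.

Theorem lemma3p1 (F : fieldType) (n : nat) (hn : (2 <= n)%N) :
  graph_iso (@reduct_adj (Ht_vert F n) (@Ht_adj F n)) (@H_adj F n).
Proof.
apply: (reduct_graph_iso (p := @Ht_to_H F n)).
- exact: Ht_to_H_surj.
- by move=> a b; rewrite H_adj_Ht_to_H.
- exact: Ht_to_H_same_nbhd.
Qed.
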